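(* Let $\phi:M_D(\mathbb{C})\to M_D(\mathbb{C})$ be a primitive unital Schwarz map and let $\varrho$ be the Perron–Frobenius eigenvector of $\phi^*$. Then for every $n\in\mathbb{N}$, $$\mathcal{M}_{\phi^n}=\{a\in M_D(\mathbb{C}) : \langle a,a\rangle_\varrho=\langle \phi^n(a),\phi^n(a)\rangle_\varrho \text{ and } \langle a^*,a^*\rangle_\varrho=\langle \phi^n(a)^*,\phi^n(a)^*\rangle_\varrho\}.$$
   Context: $M_D(\mathbb{C})$ is the algebra of complex $D\times D$ matrices. A linear map $\phi$ is a unital Schwarz map if $\phi(I)=I$ and $\phi(a^*a)\ge\phi(a)^*\phi(a)$ for all $a$; it is primitive if some power $\phi^n$ maps every nonzero positive semidefinite matrix to a positive definite matrix. $\phi^*$ denotes the adjoint of $\phi$ with respect to the Hilbert–Schmidt inner product $\langle a,b\rangle=\mathrm{Tr}(a^*b)$. The Perron–Frobenius eigenvector of $\phi^*$ is the unique positive definite $\varrho$ with $\mathrm{Tr}(\varrho)=1$ and $\phi^*(\varrho)=r\varrho$, $r$ the spectral radius (here $r=1$, so $\phi^*(\varrho)=\varrho$). For positive definite $z$, $\langle a,b\rangle_z:=\mathrm{Tr}(z a^*b)$. For a unital Schwarz map $\psi$, the multiplicative domain is $\mathcal{M}_\psi=\{a : \psi(a^*a)=\psi(a)^*\psi(a) \text{ and } \psi(aa^* )=\psi(a)\psi(a)^*\}$. *)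

From HB Require Import structures.
From mathcomp Require Import all_boot all_order all_algebra.
From mathcomp Require Import reals.
From mathcomp.real_closed Require Export complex.

Set Implicit Arguments.
Unset Strict Implicit.
Unset Printing Implicit Defensive.

Import Order.TTheory GRing.Theory Num.Theory.
Local Open Scope ring_scope.

(* Matrices M_D(C) over a numeric closed field C (instantiated with C = R[i],
   R : realType, i.e. the complex numbers, in the statement). *)
Section MatrixMaps.
Context {C : numClosedFieldType} {D : nat}.

Definition mxadj m n (A : 'M[C]_(m, n)) : 'M[C]_(n, m) := map_mx Num.conj A^T.

Definition hermitian (A : 'M[C]_D) : Prop := mxadj A = A.

Definition psd (A : 'M[C]_D) : Prop :=
  hermitian A /\ forall v : 'cV[C]_D, 0 <= (mxadj v *m A *m v) 0 0.

Definition posdef (A : 'M[C]_D) : Prop :=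
  hermitian A /\ forall v : 'cV[C]_D, v != 0 -> 0 < (mxadj v *m A *m v) 0 0.

Definition hs (a b : 'M[C]_D) : C := \tr (mxadj a *m b).

Definition hs_w (z a b : 'M[C]_D) : C := \tr (z *m mxadj a *m b).

Definition unital (phi : 'M[C]_D -> 'M[C]_D) : Prop := phi 1%:M = 1%:M.

Definition schwarz (phi : 'M[C]_D -> 'M[C]_D) : Prop :=
  forall a : 'M[C]_D, psd (phi (mxadj a *m a) - mxadj (phi a) *m phi a).

Definition primitive (phi : 'M[C]_D -> 'M[C]_D) : Prop :=
  exists n : nat, forall A : 'M[C]_D, psd A -> A != 0 -> posdef (iter n phi A).

(* Hilbert--Schmidt adjoint phi^*: <phi^* X, Y> = <X, phi Y>;
   its (i,j) entry is <E_ij, phi^* X> = <phi E_ij, X>. *)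
Definition hs_adjoint (phi : 'M[C]_D -> 'M[C]_D) (X : 'M[C]_D) : 'M[C]_D :=
  \matrix_(i, j) hs (phi (delta_mx i j)) X.

Definition mult_domain (psi : 'M[C]_D -> 'M[C]_D) (a : 'M[C]_D) : Prop :=
  psi (mxadj a *m a) = mxadj (psi a) *m psi a /\
  psi (a *m mxadj a) = psi a *m mxadj (psi a).

End MatrixMaps.

From Pilot Require Import Defs.
From HB Require Import structures.
From mathcomp Require Import all_boot all_order all_algebra.
From mathcomp Require Import reals.
From mathcomp.real_closed Require Import complex.
Import Order.TTheory GRing.Theory Num.Theory.
Local Open Scope ring_scope.

(** A unital Schwarz map [phi] preserves adjoints, and the invariant state
   [tau y := Tr (rho y)] turns the Schwarz inequality into a nonnegative
   defect [tau (a^* a) - tau (phi(a)^* phi(a))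
   = Tr (rho (phi (a^* a) - phi(a)^* phi(a)))],
   which vanishes only if [phi (a^* a) = phi(a)^* phi(a)] because [rho] is
   positive definite. Along the orbit of [a] these defects sum to
   [<a,a>_rho - <phi^n a, phi^n a>_rho], so this difference vanishes exactly when
   every defect does, which yields [phi^n (a^* a) = phi^n(a)^* phi^n(a)]; the same
   argument for [a^*] gives the other half of the multiplicative domain condition. *)

Section ConjugateTranspose.
Context {C : numClosedFieldType}.

Lemma mxadjK m n (A : 'M[C]_(m, n)) : mxadj (mxadj A) = A.
Proof. by apply/matrixP => i j; rewrite !mxE conjCK. Qed.

Lemma mxadjM m n p (A : 'M[C]_(m, n)) (B : 'M[C]_(n, p)) :
  mxadj (A *m B) = mxadj B *m mxadj A.
Proof. by rewrite /mxadj trmx_mul map_mxM. Qed.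

Lemma mxadjD m n (A B : 'M[C]_(m, n)) : mxadj (A + B) = mxadj A + mxadj B.
Proof. by rewrite /mxadj linearD map_mxD. Qed.

Lemma mxadjB m n (A B : 'M[C]_(m, n)) : mxadj (A - B) = mxadj A - mxadj B.
Proof. by rewrite /mxadj linearB map_mxB. Qed.

Lemma mxadjZ m n c (A : 'M[C]_(m, n)) : mxadj (c *: A) = c^* *: mxadj A.
Proof. by rewrite /mxadj linearZ map_mxZ. Qed.

Lemma mxadj_scalar n c : mxadj (c%:M : 'M[C]_n) = c^*%:M.
Proof. by rewrite /mxadj tr_scalar_mx map_scalar_mx. Qed.

Lemma mxtrace_adj n (A : 'M[C]_n) : \tr (mxadj A) = (\tr A)^*.
Proof. by rewrite /mxtrace rmorph_sum; apply: eq_bigr => i _; rewrite !mxE. Qed.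

End ConjugateTranspose.

Section SpectralTrace.
Context {C : numClosedFieldType} {D : nat}.

Lemma mulmx_row_col m n (A : 'M[C]_(m, n)) (M : 'M[C]_n) (B : 'M[C]_(n, m)) k :
  (row k A *m M *m col k B) 0 0 = (A *m M *m B) k k.
Proof. by rewrite -row_mul colE mulmxA -colE -row_mul !mxE. Qed.

Lemma mxadj_col_mxadj m n (A : 'M[C]_(m, n)) k :
  mxadj (col k (mxadj A)) = row k A.
Proof. by apply/matrixP => i j; rewrite !mxE conjCK. Qed.

Variable S : 'M[C]_D.
Hypothesis S_herm : Defs.hermitian S.

Let P := spectralmx S.
Let d := spectral_diag S.

Lemma spectralmx_mulmx_adj : P *m mxadj P = 1%:M.
Proof. exact/unitarymxP/spectral_unitarymx. Qed.

Lemma spectral_decomposition : S = mxadj P *m diag_mx d *m P.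
Proof.
have S_normal : S \is normalmx.
  by apply/eqP; change (S *m mxadj S = mxadj S *m S); rewrite S_herm.
have -> : mxadj P = invmx P by rewrite invmx_unitary // spectral_unitarymx.
exact/orthomx_spectralP.
Qed.

Lemma spectral_diag_quad k :
  d 0 k = (mxadj (col k (mxadj P)) *m S *m col k (mxadj P)) 0 0.
Proof.
rewrite mxadj_col_mxadj mulmx_row_col spectral_decomposition !mulmxA.
rewrite spectralmx_mulmx_adj mul1mx -mulmxA spectralmx_mulmx_adj mulmx1.
by rewrite mxE eqxx mulr1n.
Qed.

Lemma spectralmx_col_neq0 k : col k (mxadj P) != 0.
Proof.
apply/eqP => v0; have := @mulmx_row_col _ _ P 1%:M (mxadj P) k.
rewrite !mulmx1 spectralmx_mulmx_adj -mxadj_col_mxadj v0 mulmx0 !mxE eqxx.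
by move=> /eqP; rewrite eq_sym oner_eq0.
Qed.

Lemma mxtrace_mul_spectral (rho : 'M[C]_D) :
  \tr (rho *m S) = \sum_k (P *m rho *m mxadj P) k k * d 0 k.
Proof.
rewrite spectral_decomposition !mulmxA mxtrace_mulC !mulmxA /mxtrace.
by apply: eq_bigr => k _; rewrite mul_mx_diag mxE.
Qed.

End SpectralTrace.

Section PositiveTrace.
Context {C : numClosedFieldType} {D : nat}.
Variables rho S : 'M[C]_D.
Hypotheses (rho_pd : posdef rho) (S_psd : psd S).

Let P := spectralmx S.
Let d := spectral_diag S.

Lemma spectral_weight_gt0 k : 0 < (P *m rho *m mxadj P) k k.
Proof.
rewrite -mulmx_row_col -mxadj_col_mxadj.
by apply: rho_pd.2; apply: spectralmx_col_neq0; case: S_psd.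
Qed.

Lemma spectral_diag_ge0 k : 0 <= d 0 k.
Proof. by rewrite spectral_diag_quad; case: S_psd. Qed.

Lemma mxtrace_posdef_psd_ge0 : 0 <= \tr (rho *m S).
Proof.
rewrite mxtrace_mul_spectral; last by case: S_psd.
apply: sumr_ge0 => k _.
by rewrite mulr_ge0 ?spectral_diag_ge0 ?ltW ?spectral_weight_gt0.
Qed.

Lemma mxtrace_posdef_psd_eq0 : \tr (rho *m S) = 0 -> S = 0.
Proof.
have S_herm : Defs.hermitian S by case: S_psd.
rewrite mxtrace_mul_spectral // => /eqP.
rewrite psumr_eq0 => [/allP d0|k _]; last first.
  by rewrite mulr_ge0 ?spectral_diag_ge0 ?ltW ?spectral_weight_gt0.
suff d_eq0 : d = 0.
  by rewrite (spectral_decomposition _ S_herm) -/d d_eq0 raddf0 mulmx0 mul0mx.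
apply/rowP => k; rewrite mxE; have /(_ (mem_index_enum _)) := d0 k.
by rewrite mulf_eq0 gt_eqF ?spectral_weight_gt0 //= => /eqP.
Qed.

End PositiveTrace.

Section InvariantState.
Context {C : numClosedFieldType} {D : nat}.

Lemma mxtrace_mul_delta (A : 'M[C]_D) i j : \tr (A *m delta_mx i j) = A j i.
Proof.
rewrite -(mul_delta_mx (0 : 'I_1)) mulmxA -colE mxtrace_mulC -rowE.
by rewrite /mxtrace big_ord1 !mxE.
Qed.

Lemma mxtrace_hs_adjoint_fixed
    (phi : {linear 'M[C]_D -> 'M[C]_D}) (rho : 'M[C]_D) :
  Defs.hermitian rho -> hs_adjoint phi rho = rho ->
  forall x, \tr (rho *m phi x) = \tr (rho *m x).
Proof.
move=> rho_herm rho_fixed.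
have on_delta i j : \tr (rho *m phi (delta_mx i j)) = \tr (rho *m delta_mx i j).
  have /matrixP /(_ i j) := rho_fixed; rewrite mxE /hs => /(congr1 Num.conj).
  rewrite -mxtrace_adj mxadjM mxadjK rho_herm => ->.
  by rewrite mxtrace_mul_delta -[in LHS]rho_herm !mxE conjCK.
move=> x; rewrite [x in RHS]matrix_sum_delta [x in LHS]matrix_sum_delta.
rewrite !linear_sum; apply: eq_bigr => i _; rewrite !linear_sum.
by apply: eq_bigr => j _; rewrite !linearZ /= on_delta.
Qed.

End InvariantState.

Section SchwarzMaps.
Context {C : numClosedFieldType}.

Lemma eq_conj_scale_coef (V : lmodType C) (u v u' v' : V) :
  (forall s : C, s^* *: u + s *: v = s *: v' + s^* *: u') -> v = v'.
Proof.
move=> uv; have := uv 1; have := uv 'i; rewrite conjCi rmorph1 !scale1r.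
move=> /(congr1 ( *:%R (- 'i))); rewrite !scalerDr !scalerA mulrNN mulNr.
rewrite -expr2 sqrCi !scaleNr !scale1r !opprK => uv_i uv_1.
have : (- u + v) + (u + v) = (v' - u') + (v' + u') by rewrite uv_i uv_1.
rewrite [LHS]addrACA [RHS]addrACA !addNr add0r addr0.
by rewrite -!mulr2n -!scaler_nat => /scalerI; apply; rewrite pnatr_eq0.
Qed.

Lemma mxadj_addmx_scalar_mul D (x : 'M[C]_D) s :
  mxadj (x + s%:M) *m (x + s%:M) =
  mxadj x *m x + s *: mxadj x + s^* *: x + (s^* * s)%:M.
Proof.
rewrite mxadjD mxadj_scalar mulmxDl !mulmxDr mul_mx_scalar !mul_scalar_mx.
by rewrite scale_scalar_mx addrA.
Qed.

Variables (D : nat) (phi : {linear 'M[C]_D -> 'M[C]_D}).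
Hypothesis phi_schwarz : schwarz phi.

Lemma schwarz_hermitian (c : 'M[C]_D) :
  mxadj (phi (mxadj c *m c)) = phi (mxadj c *m c).
Proof.
have [+ _] := phi_schwarz c; rewrite /Defs.hermitian mxadjB mxadjM mxadjK.
by move=> /(congr1 (fun M => M + mxadj (phi c) *m phi c)); rewrite !subrK.
Qed.

Hypothesis phi_unital : unital phi.

Lemma schwarz_mxadj (x : 'M[C]_D) : phi (mxadj x) = mxadj (phi x).
Proof.
(* Compare the terms linear in [s] on both sides of the hermiticity of
   [phi ((x + s)^* (x + s))]. *)
symmetry; apply: (eq_conj_scale_coef _ (mxadj (phi (mxadj x))) _ (phi x)) => s.
have norm_real : (s^* * s)^* = s^* * s.
  by rewrite geC0_conj // mulrC mul_conjC_ge0.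
have := schwarz_hermitian (x + s%:M).
rewrite mxadj_addmx_scalar_mul !linearD !linearZ /= -scalemx1 linearZ /=.
rewrite phi_unital !mxadjD !mxadjZ schwarz_hermitian scalemx1 mxadj_scalar.
rewrite norm_real conjCK rmorph1 scalemx1 -!addrA => /addrI.
by rewrite !addrA => /addIr.
Qed.

End SchwarzMaps.

Section MultiplicativeDomain.
Context {C : numClosedFieldType} {D : nat}.
Variables (phi : {linear 'M[C]_D -> 'M[C]_D}) (rho : 'M[C]_D).
Hypotheses (phi_unital : unital phi) (phi_schwarz : schwarz phi).
Hypotheses (rho_pd : posdef rho) (rho_fixed : hs_adjoint phi rho = rho).

Let tau (y : 'M[C]_D) := \tr (rho *m y).

Lemma tau_iter n x : tau (iter n phi x) = tau x.
Proof.
elim: n => //= n <-.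
exact: (mxtrace_hs_adjoint_fixed _ _ rho_pd.1 rho_fixed).
Qed.

Lemma iter_mxadj n x : iter n phi (mxadj x) = mxadj (iter n phi x).
Proof. by elim: n => //= n ->; rewrite schwarz_mxadj. Qed.

Lemma tau_schwarz_defectE y :
  tau (mxadj y *m y) - tau (mxadj (phi y) *m phi y) =
  \tr (rho *m (phi (mxadj y *m y) - mxadj (phi y) *m phi y)).
Proof. by rewrite -(tau_iter 1) mulmxBr linearB. Qed.

Lemma tau_schwarz_le y : tau (mxadj (phi y) *m phi y) <= tau (mxadj y *m y).
Proof.
by rewrite -subr_ge0 tau_schwarz_defectE; apply: mxtrace_posdef_psd_ge0.
Qed.

Lemma tau_schwarz_eq y : tau (mxadj y *m y) = tau (mxadj (phi y) *m phi y) ->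
  phi (mxadj y *m y) = mxadj (phi y) *m phi y.
Proof.
move=> /eqP; rewrite -subr_eq0 tau_schwarz_defectE => /eqP.
move=> /(mxtrace_posdef_psd_eq0 _ _ rho_pd (phi_schwarz y)) /eqP.
by rewrite subr_eq0 => /eqP.
Qed.

Lemma tau_iter_le n a :
  tau (mxadj (iter n phi a) *m iter n phi a) <= tau (mxadj a *m a).
Proof. by elim: n => //= n IH; apply: le_trans (tau_schwarz_le _) IH. Qed.

Lemma iter_multiplicative n a :
  tau (mxadj a *m a) = tau (mxadj (iter n phi a) *m iter n phi a) ->
  iter n phi (mxadj a *m a) = mxadj (iter n phi a) *m iter n phi a.
Proof.
elim: n => //= n IH tau_eq; set b := iter n phi a in IH tau_eq *.
have tau_b : tau (mxadj b *m b) = tau (mxadj (phi b) *m phi b).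
  by apply/eqP; rewrite eq_le tau_schwarz_le -tau_eq tau_iter_le.
by rewrite IH ?tau_schwarz_eq // tau_eq tau_b.
Qed.

Lemma mult_domain_iterP n a :
  mult_domain (iter n phi) a <->
  (hs_w rho a a = hs_w rho (iter n phi a) (iter n phi a) /\
   hs_w rho (mxadj a) (mxadj a) =
     hs_w rho (mxadj (iter n phi a)) (mxadj (iter n phi a))).
Proof.
rewrite /hs_w -!mulmxA !mxadjK -!/(tau _); split.
  by move=> [mult_aa mult_aa']; rewrite -mult_aa -mult_aa' !tau_iter.
move=> [tau_aa tau_aa']; split; first exact: iter_multiplicative.
by have := @iter_multiplicative n (mxadj a); rewrite iter_mxadj !mxadjK; apply.
Qed.

End MultiplicativeDomain.

Theorem lemma3p1 (R : realType) (D : nat)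
    (phi : {linear 'M[R[i]]_D -> 'M[R[i]]_D}) (rho : 'M[R[i]]_D) :
  unital phi -> schwarz phi -> primitive phi ->
  posdef rho -> \tr rho = 1 -> hs_adjoint phi rho = rho ->
  forall (n : nat) (a : 'M[R[i]]_D),
    mult_domain (iter n phi) a <->
    (hs_w rho a a = hs_w rho (iter n phi a) (iter n phi a) /\
     hs_w rho (mxadj a) (mxadj a) =
       hs_w rho (mxadj (iter n phi a)) (mxadj (iter n phi a))).
Proof.
move=> phi_unital phi_schwarz _ rho_pd _ rho_fixed n a.
exact: mult_domain_iterP.
Qed.
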